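(* Let $0<p<1$ be fixed, $b=1/(1-p)$, and $c=c(n)=\lfloor \log_b n-\log_b[(\log_b n)(\log n)]\rfloor+2$. Let $X_c$ be the number of $c$-element vertex sets of $G(n,p,c)$ that are both dominating and tropical. Then $\mathbb{E}(X_c)\to\infty$ as $n\to\infty$.
   Context: $G(n,p)$ is the random graph on $n$ vertices in which each of the $\binom n2$ edges is present independently with probability $p$. For a positive integer $c$, $G(n,p,c)$ is obtained from $G(n,p)$ by colouring each vertex with one of the colours $1,\dots,c$ uniformly at random, independently of each other and of the edges. A vertex set is tropical if every one of the $c$ colours appears on at least one of its vertices. $\log$ denotes the natural logarithm. *)

From Stdlib Require Import Reals.
From mathcomp Require Import all_boot.

Set Implicit Arguments.
Unset Strict Implicit.
Unset Printing Implicit Defensive.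

(* Vertices of G(n,p,c) are 'I_n.  A graph is an edge set E of pairs (u,v) with u < v
   (so each unordered pair {u,v} is encoded once). *)
Definition upper_pairs (n : nat) : {set 'I_n * 'I_n} := [set x : 'I_n * 'I_n | (nat_of_ord x.1 < nat_of_ord x.2)%N].

Definition adj (n : nat) (E : {set 'I_n * 'I_n}) (u v : 'I_n) : bool :=
  ((u, v) \in E) || ((v, u) \in E).

Definition dominating (n : nat) (E : {set 'I_n * 'I_n}) (S : {set 'I_n}) : bool :=
  [forall v : 'I_n, (v \in S) || [exists u in S, adj E u v]].

Definition tropical (n c : nat) (col : {ffun 'I_n -> 'I_c}) (S : {set 'I_n}) : bool :=
  [forall k : 'I_c, [exists v in S, col v == k]].

Definition X_count (n c k : nat) (E : {set 'I_n * 'I_n}) (col : {ffun 'I_n -> 'I_c}) : nat :=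
  #|[set S : {set 'I_n} | [&& #|S| == k, dominating E S & tropical col S]]|.

Local Open Scope R_scope.

Definition graph_weight (n : nat) (p : R) (E : {set 'I_n * 'I_n}) : R :=
  p ^ #|E| * (1 - p) ^ ('C(n, 2) - #|E|).

Definition colour_weight (n c : nat) : R := (/ INR c) ^ n.

Definition E_X (n c k : nat) (p : R) : R :=
  \big[Rplus/0]_(E : {set 'I_n * 'I_n} | E \subset upper_pairs n)
    \big[Rplus/0]_(col : {ffun 'I_n -> 'I_c})
      (graph_weight p E * colour_weight n c * INR (X_count k E col)).

(* floor x: up x is the unique integer with x < up x <= x + 1. *)
Definition floorR (x : R) : Z := (up x - 1)%Z.

Definition logb (b x : R) : R := ln x / ln b.

Definition c_of (p : R) (n : nat) : Z :=
  let b := / (1 - p) in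
  (floorR (logb b (INR n) - logb b (logb b (INR n) * ln (INR n))) + 2)%Z.

(* E(X_c) is at least C(n,c) times the probability that a fixed c-set S is
   tropical and dominating.  S is tropical with probability at least c^-c, and
   dominating with probability exactly (1 - (1-p)^c)^(n-c), because the edge sets
   joining the vertices outside S to S are pairwise disjoint.  As
   C(n,c) >= ((n-c)/c)^c and 1 - x >= exp(-x(1+2x)) for x <= 1/2, the logarithm
   of this bound is at least c ln(n-c) - 2c ln c - n(1-p)^c(1 + 2(1-p)^c).
   With lam = ln b and L = log_b n, the choice of c gives
   L - log_b(L ln n) + 1 < c <= L + 2, hence n(1-p)^c <= (1-p) lam L^2 while
   c ln n >= lam L^2 - O(L ln L); the exponent is therefore at least
   (p/2) lam L^2 - O(L ln L), which tends to infinity. *)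

From HB Require Import structures.
From Stdlib Require Import Reals Lra Psatz ZArith.
From mathcomp Require Import all_boot zify.

Set Implicit Arguments.
Unset Strict Implicit.
Unset Printing Implicit Defensive.

Local Open Scope R_scope.

HB.instance Definition _ := Monoid.isComLaw.Build R 0 Rplus
  (fun x y z => esym (Rplus_assoc x y z)) Rplus_comm Rplus_0_l.
HB.instance Definition _ := Monoid.isComLaw.Build R 1 Rmult
  (fun x y z => esym (Rmult_assoc x y z)) Rmult_comm Rmult_1_l.
HB.instance Definition _ := Monoid.isMulLaw.Build R 0 Rmult Rmult_0_l Rmult_0_r.
HB.instance Definition _ := Monoid.isAddLaw.Build R Rmult Rplus
  Rmult_plus_distr_r Rmult_plus_distr_l.

Lemma pow_le1 x k : 0 <= x <= 1 -> x ^ k <= 1.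
Proof. by move=> x01; rewrite -(pow1 k); apply: pow_incr. Qed.

Lemma Rsum_le_compat (I : Type) (r : seq I) (P : pred I) (F G : I -> R) :
  (forall i, P i -> F i <= G i) ->
  \big[Rplus/0]_(i <- r | P i) F i <= \big[Rplus/0]_(i <- r | P i) G i.
Proof. by move=> FG; apply: (big_ind2 Rle) => //; [lra | move=> *; lra]. Qed.

(* Unlike [big_distrl], the result is stated with [Rmult] itself rather than
   through a canonical-structure projection, so [ring] and [lra] see it. *)
Lemma Rsum_distrl (I : Type) (r : seq I) (P : pred I) (F : I -> R) (a : R) :
  \big[Rplus/0]_(i <- r | P i) F i * a = \big[Rplus/0]_(i <- r | P i) (F i * a).
Proof. exact: big_distrl. Qed.

Lemma Rprod_const (I : Type) (r : seq I) (a : R) :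
  \big[Rmult/1]_(i <- r) a = a ^ size r.
Proof. by elim: r => [|i r IH]; rewrite ?big_nil // big_cons IH. Qed.

Lemma Rprod_indicator (I : Type) (r : seq I) (b : pred I) :
  \big[Rmult/1]_(i <- r) (if b i then 1 else 0) = if all b r then 1 else 0.
Proof.
elim: r => [|i r IH]; first by rewrite big_nil.
by rewrite big_cons IH /=; case: (b i); case: (all b r) => /=; ring.
Qed.

Lemma INR_sum (I : Type) (r : seq I) (P : pred I) (F : I -> nat) :
  INR (\sum_(i <- r | P i) F i) = \big[Rplus/0]_(i <- r | P i) INR (F i).
Proof. exact: (big_morph INR plus_INR). Qed.

Lemma INR_expn (a k : nat) : INR (a ^ k)%N = INR a ^ k.
Proof. by elim: k => [|k IH] //; rewrite expnS mult_INR IH. Qed.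

Lemma INR_card (T : finType) (A : {pred T}) :
  INR #|A| = \big[Rplus/0]_(x : T) (if x \in A then 1 else 0).
Proof. by rewrite -sum1_card INR_sum [LHS]big_mkcond. Qed.

Lemma cardsU_disjoint (T : finType) (A B : {set T}) :
  [disjoint A & B] -> #|A :|: B| = (#|A| + #|B|)%N.
Proof. by move=> dAB; rewrite cardsU (disjoint_setI0 dAB) cards0 subn0. Qed.

(** * Random subsets *)

Section RandomSubset.
Variables (T : finType) (p q : R).

(* For [q = 1 - p], [Esub U g] is the expectation of [g E] for a random subset
   [E] of [U] containing each element independently with probability [p]. *)
Definition Esub (U : {set T}) (g : {set T} -> R) : R :=
  \big[Rplus/0]_(E : {set T} | E \subset U) (p ^ #|E| * q ^ #|U :\: E| * g E).

Lemma eq_Esub (U : {set T}) (g g' : {set T} -> R) :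
  (forall E : {set T}, E \subset U -> g E = g' E) -> Esub U g = Esub U g'.
Proof. by move=> gg'; apply: eq_bigr => E sEU; rewrite gg'. Qed.

Lemma EsubMr (U : {set T}) (g : {set T} -> R) (a : R) :
  Esub U (fun E => g E * a) = Esub U g * a.
Proof. by rewrite /Esub big_distrl /=; apply: eq_bigr => E _; ring. Qed.

Lemma EsubD (U : {set T}) (f g : {set T} -> R) :
  Esub U (fun E => f E + g E) = Esub U f + Esub U g.
Proof. by rewrite /Esub -big_split /=; apply: eq_bigr => E _; ring. Qed.

Lemma Esub_setU (A B : {set T}) (g : {set T} -> R) : [disjoint A & B] ->
  Esub (A :|: B) g = Esub A (fun E1 => Esub B (fun E2 => g (E1 :|: E2))).
Proof.
move=> dAB; rewrite /Esub.
under [RHS]eq_bigr => E1 _ do rewrite big_distrr /=.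
rewrite pair_big /= (reindex_onto (fun E => (E.1 :|: E.2)) (fun E => (E :&: A, E :&: B))) /=;
  last by move=> E sEAB; rewrite -setIUr (setIidPl sEAB).
have splitE (E1 E2 : {set T}) : E1 \subset A -> E2 \subset B ->
    ((E1 :|: E2) :&: A = E1) * ((E1 :|: E2) :&: B = E2).
  move=> sE1 sE2; rewrite !setIUl (setIidPl sE1) (setIidPl sE2).
  rewrite (disjoint_setI0 (disjointWl sE1 dAB)) setIC.
  by rewrite (disjoint_setI0 (disjointWr sE2 dAB)) setU0 set0U.
apply: eq_big => [[E1 E2] | [E1 E2]] /=.
  apply/andP/andP => [[_ /eqP [<- <-]] | [sE1 sE2]]; first by rewrite !subsetIr.
  by rewrite setUSS // !splitE.
move=> /andP [_ /eqP [eE1 eE2]].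
have sE1 : E1 \subset A by rewrite -eE1 subsetIr.
have sE2 : E2 \subset B by rewrite -eE2 subsetIr.
have dE : [disjoint E1 & E2] by apply: disjointWl sE1 (disjointWr sE2 dAB).
have -> : (A :|: B) :\: (E1 :|: E2) = (A :\: E1) :|: (B :\: E2).
  apply/setP => x; rewrite !inE.
  case xE1: (x \in E1); first by rewrite (disjointFr dAB (subsetP sE1 x xE1)) andbF.
  case xE2: (x \in E2) => //=.
  by rewrite (disjointFl dAB (subsetP sE2 x xE2)).
rewrite !cardsU_disjoint //; first by rewrite !pow_add; ring.
by apply: disjointWl (subsetDl _ _) (disjointWr (subsetDl _ _) dAB).
Qed.

Lemma Esub_set0 (g : {set T} -> R) : Esub set0 g = g set0.
Proof.
rewrite /Esub (big_pred1 set0) => [|E]; first by rewrite cards0 setD0 cards0 /=; ring.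
by rewrite subset0.
Qed.

Lemma Esub_set1 (x : T) (g : {set T} -> R) : Esub [set x] g = p * g [set x] + q * g set0.
Proof.
rewrite /Esub (bigD1 set0) ?sub0set //= (bigD1 [set x]) /=; last first.
  by rewrite subxx; apply/set0Pn; exists x; rewrite set11.
rewrite big1 => [|E /andP [/andP [sEx E0] Ex]]; last first.
  by move: sEx; rewrite subset1 (negbTE E0) (negbTE Ex).
by rewrite cards0 setD0 cards1 setDv cards0 /=; ring.
Qed.

Lemma Esub_const1 (U : {set T}) : Esub U (fun _ => 1) = (p + q) ^ #|U|.
Proof.
elim: {U}#|U| {-2}U (eqxx #|U|) => [|k IH] U /eqP cardU.
  by rewrite (cards0_eq cardU) Esub_set0 cards0.
have [x xU] : {x | x \in U} by apply/sigW/card_gt0P; rewrite cardU.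
have cardUx : #|U :\ x| = k by move: cardU; rewrite (cardsD1 x U) xU => -[].
rewrite -{1}(setD1K xU) Esub_setU ?disjoints1 ?setD11 // Esub_set1 !IH ?cardUx ?cardU //=.
ring.
Qed.

Lemma Esub_eq0 (U : {set T}) :
  Esub U (fun E => if E == set0 then 1 else 0) = q ^ #|U|.
Proof.
rewrite /Esub (bigD1 set0) ?sub0set //= big1 => [|E /andP [_ /negbTE ->]]; last ring.
by rewrite eqxx cards0 setD0 /=; ring.
Qed.

Lemma Esub_neq0 (U : {set T}) :
  Esub U (fun E => if E != set0 then 1 else 0) = (p + q) ^ #|U| - q ^ #|U|.
Proof.
rewrite -Esub_const1 -Esub_eq0.
have := EsubD U (fun E => if E != set0 then 1 else 0) (fun E => if E == set0 then 1 else 0).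
rewrite (eq_Esub (g' := fun _ => 1)) => [|E _]; last by case: (E == set0) => /=; ring.
lra.
Qed.

Lemma Esub_prod (I : eqType) (s : seq I) (P : I -> {set T})
    (h : I -> {set T} -> R) (U : {set T}) :
  p + q = 1 -> uniq s -> (forall i, i \in s -> P i \subset U) ->
  {in s &, forall i j, i != j -> [disjoint P i & P j]} ->
  Esub U (fun E => \big[Rmult/1]_(i <- s) h i (E :&: P i)) =
  \big[Rmult/1]_(i <- s) Esub (P i) (h i).
Proof.
move=> pq1; elim: s U => [|i s IH] U /=.
  move=> _ _ _; transitivity (Esub U (fun _ => 1)).
    by apply: eq_Esub => E _; rewrite big_nil.
  by rewrite Esub_const1 pq1 pow1 big_nil.
move=> /andP [i_s uniq_s] sPU dP.
have dPi j : j \in s -> [disjoint P i & P j].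
  by move=> js; apply: dP; rewrite ?inE ?eqxx ?js ?orbT //; apply: contraNneq i_s => ->.
have sPi : P i \subset U by apply: sPU; rewrite inE eqxx.
rewrite big_cons -(setID U (P i)) (setIidPr sPi) Esub_setU; last first.
  by rewrite disjoint_sym disjoints_subset subsetDr.
rewrite -EsubMr; apply: eq_Esub => E1 sE1.
rewrite Rmult_comm -(IH (U :\: P i)) // => [|j js|j k js ks]; last 2 first.
- by rewrite subsetD sPU ?inE ?js ?orbT // disjoint_sym dPi.
- by apply: dP; rewrite inE (js, ks) orbT.
rewrite -EsubMr; apply: eq_Esub => E2 sE2; rewrite big_cons [RHS]Rmult_comm.
have E2Pi : E2 :&: P i = set0.
  by apply: disjoint_setI0; apply: disjointWl sE2 _; rewrite disjoints_subset subsetDr.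
congr (_ * _); first by rewrite setIUl (setIidPl sE1) E2Pi setU0.
rewrite !big_seq; apply: eq_bigr => j js.
by rewrite setIUl (disjoint_setI0 (disjointWl sE1 (dPi j js))) set0U.
Qed.
End RandomSubset.

(** * Domination and tropicality of a fixed vertex set *)

Lemma card_upper_pairs n : #|upper_pairs n| = 'C(n, 2).
Proof.
rewrite -[n in 'C(n, _)]card_ord -card_draws.
have inj : {in upper_pairs n &, injective (fun x : 'I_n * 'I_n => [set x.1; x.2])}.
  move=> [a b] [c d]; rewrite !inE /= => ab cd e.
  have := set21 a b; have := set22 a b; rewrite e !inE.
  by move=> /orP [] /eqP ea /orP [] /eqP eb; subst; rewrite //; lia.
rewrite -(card_in_imset inj); apply: eq_card => A; rewrite !inE.
apply/imsetP/cards2P => [[[a b]] /[!inE] /= ab -> | [a [b [ab ->]]]].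
  by exists a, b; rewrite -val_eqE neq_ltn ab.
move: ab; rewrite -val_eqE neq_ltn => /orP [ab | ba].
  by exists (a, b); rewrite ?inE.
by exists (b, a); rewrite ?inE // setUC.
Qed.

Lemma sum_graph_weightE n p (g : {set 'I_n * 'I_n} -> R) :
  \big[Rplus/0]_(E : {set 'I_n * 'I_n} | E \subset upper_pairs n) (graph_weight p E * g E)
  = Esub p (1 - p) (upper_pairs n) g.
Proof.
apply: eq_bigr => E sE.
by rewrite /graph_weight cardsD (setIidPr sE) card_upper_pairs.
Qed.

Definition link_pairs n (S : {set 'I_n}) (v : 'I_n) : {set 'I_n * 'I_n} :=
  [set x in upper_pairs n | ((x.1 == v) && (x.2 \in S)) || ((x.2 == v) && (x.1 \in S))].

Lemma link_pairs_sub n (S : {set 'I_n}) v : link_pairs S v \subset upper_pairs n.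
Proof. by apply/subsetP => x /[!inE] /andP []. Qed.

Lemma disjoint_link_pairs n (S : {set 'I_n}) v w :
  v \notin S -> w \notin S -> v != w -> [disjoint link_pairs S v & link_pairs S w].
Proof.
move=> vS wS vw; apply/pred0P => -[a b] /=; rewrite !inE /=.
apply/negP => /andP [/andP [_ /orP [] /andP [/eqP ea hb]] /andP [_ /orP [] /andP [/eqP ea' hb']]].
all: by subst; rewrite ?eqxx ?hb ?hb' in vw vS wS.
Qed.

Lemma card_link_pairs n (S : {set 'I_n}) v : v \notin S -> #|link_pairs S v| = #|S|.
Proof.
move=> vS.
pose f (u : 'I_n) : 'I_n * 'I_n := if (u < v)%N then (u, v) else (v, u).
have f_inj : {in S &, injective f}.
  move=> u1 u2 u1S u2S; rewrite /f.
  by case: ifP; case: ifP => _ _ [] // e1 e2; subst; rewrite ?u1S ?u2S in vS.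
rewrite -(card_in_imset f_inj); congr #|pred_of_set _|; apply/setP => -[a b].
rewrite !inE /=; apply/idP/imsetP => [| [u uS]].
  move=> /andP [ab /orP [] /andP [/eqP ea bS]]; subst.
    by exists b; rewrite // /f ltnNge ltnW.
  by exists a; rewrite // /f ab.
have uv : nat_of_ord u != v by apply: contraNneq vS => /val_inj <-.
rewrite /f; case: ltnP => [uv' [-> ->] | vu [-> ->]]; first by rewrite uv' eqxx uS orbT.
by rewrite ltn_neqAle eq_sym uv vu eqxx uS.
Qed.

Lemma dominating_link_pairs n (E : {set 'I_n * 'I_n}) (S : {set 'I_n}) :
  E \subset upper_pairs n ->
  dominating E S = all (fun v => E :&: link_pairs S v != set0) (enum (~: S)).
Proof.
move=> /subsetP sE; apply/forallP/allP => [domS v | linkS v].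
  rewrite mem_enum inE => vS; have := domS v; rewrite (negbTE vS) /=.
  case/existsP => u /andP [uS /orP [] uv]; apply/set0Pn.
    by exists (u, v); move: (sE _ uv); rewrite !inE uv /= eqxx uS orbT => ->.
  by exists (v, u); move: (sE _ uv); rewrite !inE uv /= eqxx uS => ->.
case vS: (v \in S) => //=; apply/existsP.
have /set0Pn [[a b]] : E :&: link_pairs S v != set0 by apply: linkS; rewrite mem_enum inE vS.
rewrite !inE /= => /andP [ab /andP [_ /orP [] /andP [/eqP ea uS]]]; subst.
  by exists b; rewrite uS /adj ab orbT.
by exists a; rewrite uS /adj ab.
Qed.

(* The events "v has a neighbour in S", for v outside S, depend on the disjoint
   edge sets [link_pairs S v] and are therefore independent. *)
Lemma prob_dominating n p (S : {set 'I_n}) :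
  \big[Rplus/0]_(E : {set 'I_n * 'I_n} | E \subset upper_pairs n)
     (graph_weight p E * (if dominating E S then 1 else 0))
  = (1 - (1 - p) ^ #|S|) ^ (n - #|S|).
Proof.
rewrite sum_graph_weightE; transitivity (Esub p (1 - p) (upper_pairs n) (fun E =>
    \big[Rmult/1]_(v <- enum (~: S)) (fun F => if F != set0 then 1 else 0) (E :&: link_pairs S v))).
  by apply: eq_Esub => E sE; rewrite (dominating_link_pairs S sE) Rprod_indicator.
rewrite (Esub_prod (fun _ F => if F != set0 then 1 else 0)) ?Rplus_minus ?enum_uniq //;
  last 2 first.
- by move=> v _; exact: link_pairs_sub.
- by move=> v w /[!mem_enum] /[!inE]; exact: disjoint_link_pairs.
rewrite big_seq (eq_bigr (fun _ => 1 - (1 - p) ^ #|S|)) -?big_seq => [|v].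
  by rewrite Rprod_const -cardE; congr (_ ^ _); have := cardsC S; rewrite card_ord; lia.
by rewrite mem_enum inE => vS; rewrite Esub_neq0 card_link_pairs // Rplus_minus pow1.
Qed.

Lemma card_family_fixed (aT rT : finType) (A : {set aT}) (phi : aT -> rT) :
  #|family (fun x => if x \in A then pred1 (phi x) else predT)| = (#|rT| ^ #|~: A|)%N.
Proof.
rewrite card_family foldrE big_map big_enum /= (bigID (mem A)) /= big1 => [|x ->]; last exact: card1.
rewrite mul1n (eq_bigr (fun _ => #|rT|)) => [|x /negbTE -> //].
by rewrite prod_nat_const; congr (_ ^ _)%N; apply: eq_card => x; rewrite !inE.
Qed.

Lemma tropical_fixed_colouring n c (S : {set 'I_n}) (col : {ffun 'I_n -> 'I_c.+1}) :
  #|S| = c.+1 -> {in S, forall x, col x = inord (index x (enum S))} -> tropical col S.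
Proof.
move=> cardS colS; apply/forallP => k; apply/existsP.
have k_lt : (k < size (enum S))%N by rewrite -cardE cardS ltn_ord.
have x0 : 'I_n by case: (enum S) k_lt => [|x _] //.
have xS : nth x0 (enum S) k \in S by rewrite -mem_enum mem_nth.
exists (nth x0 (enum S) k); rewrite xS colS // index_uniq ?enum_uniq //.
by apply/eqP/val_inj; rewrite /= inordK.
Qed.

(* Colourings that agree on S with a fixed bijection onto the colours are
   tropical, and there are c^(n-c) of them. *)
Lemma prob_tropical_ge n c (S : {set 'I_n}) : #|S| = c.+1 ->
  (/ INR c.+1) ^ c.+1 <= \big[Rplus/0]_(col : {ffun 'I_n -> 'I_c.+1})
                           (colour_weight n c.+1 * (if tropical col S then 1 else 0)).
Proof.
move=> cardS.
pose F (x : 'I_n) : pred 'I_c.+1 := if x \in S then pred1 (inord (index x (enum S))) else predT.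
have c_pos : 0 < INR c.+1 by apply: lt_0_INR; lia.
have Fcol col : col \in family F -> tropical col S.
  move=> /familyP colF; apply: tropical_fixed_colouring => // x xS.
  by have := colF x; rewrite /F xS => /eqP.
have le_cn : (c.+1 <= n)%N by rewrite -cardS -[n in (_ <= n)%N]card_ord max_card.
have -> : (/ INR c.+1) ^ c.+1 = \big[Rplus/0]_(col : {ffun 'I_n -> 'I_c.+1})
                             (colour_weight n c.+1 * (if col \in family F then 1 else 0)).
  rewrite -big_distrr /= -INR_card card_family_fixed card_ord INR_expn /colour_weight.
  rewrite cardsCs setCK card_ord cardS -{1}(subnKC le_cn) pow_add Rmult_assoc.
  by rewrite -Rpow_mult_distr Rinv_l ?pow1 ?Rmult_1_r //; lra.
apply: Rsum_le_compat => col _.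
have w_ge0 : 0 <= colour_weight n c.+1 by apply: pow_le; apply/Rlt_le/Rinv_0_lt_compat.
by case: ifP => [/Fcol -> | _]; [lra | case: (tropical col S); lra].
Qed.

(** * A lower bound for E(X_c) *)

Lemma E_X_sum n c k p :
  E_X n c k p = \big[Rplus/0]_(S : {set 'I_n} | #|S| == k)
    ((1 - (1 - p) ^ k) ^ (n - k) *
     \big[Rplus/0]_(col : {ffun 'I_n -> 'I_c}) (colour_weight n c * (if tropical col S then 1 else 0))).
Proof.
rewrite /E_X /X_count.
under eq_bigr => E _ do under eq_bigr => col _ do rewrite INR_card big_distrr /=.
under eq_bigr => E _ do rewrite exchange_big /=.
rewrite exchange_big /= [RHS]big_mkcond /=; apply: eq_bigr => S _.
under eq_bigr => E _ do under eq_bigr => col _ do rewrite inE.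
case: eqP => [<- | _] /=; last first.
  by rewrite big1 // => E _; rewrite big1 // => col _; ring.
rewrite -prob_dominating big_distrl /=; apply: eq_bigr => E _.
rewrite big_distrr /=; apply: eq_bigr => col _.
by case: (dominating E S); case: (tropical col S) => /=; ring.
Qed.

Lemma E_X_ge n c p : 0 <= p <= 1 ->
  INR 'C(n, c.+1) * ((1 - (1 - p) ^ c.+1) ^ (n - c.+1) * (/ INR c.+1) ^ c.+1)
  <= E_X n c.+1 c.+1 p.
Proof.
move=> p01; rewrite E_X_sum -[n in 'C(n, _)]card_ord -card_draws INR_card.
rewrite Rsum_distrl [X in _ <= X]big_mkcond; apply: Rsum_le_compat => S _; rewrite inE.
case: eqP => [cardS | _]; last by apply: Req_le; ring.
rewrite Rmult_1_l; apply: Rmult_le_compat_l; last exact: prob_tropical_ge.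
by apply: pow_le; have := @pow_le1 (1 - p) c.+1; lra.
Qed.

Lemma fact_leq_expn c : (c`! <= c ^ c)%N.
Proof.
elim: c => [|c IH] //; rewrite factS expnS leq_mul2l /=.
by apply: leq_trans IH _; case: c => [|c] //; rewrite leq_exp2r.
Qed.

Lemma ffact_geq n c : ((n - c) ^ c <= n ^_ c)%N.
Proof.
rewrite ffact_prod; have := @prod_nat_const _ [pred i : 'I_c | true] (n - c).
rewrite cardE /= size_enum_ord => <-.
by apply: leq_prod => i _; apply: leq_sub2l; exact: ltnW.
Qed.

Lemma bin_lower n c : ((n - c) ^ c <= 'C(n, c) * c ^ c)%N.
Proof.
by apply: leq_trans (ffact_geq n c) _; rewrite -bin_ffact leq_mul2l fact_leq_expn orbT.
Qed.

Lemma INR_binomial_ge n c : (0 < c <= n)%N ->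
  (INR n - INR c) ^ c * (/ INR c) ^ c <= INR 'C(n, c).
Proof.
move=> /andP [c_gt0 c_le_n].
have c_pos : 0 < INR c by apply: lt_0_INR; apply/ltP.
have := le_INR _ _ (leP (bin_lower n c)).
rewrite mult_INR !INR_expn minus_INR; last exact/leP.
move=> /(Rmult_le_compat_r ((/ INR c) ^ c) _ _ (pow_le _ c (Rlt_le _ _ (Rinv_0_lt_compat _ c_pos)))) h.
by apply: Rle_trans h _; rewrite Rmult_assoc -Rpow_mult_distr Rinv_r ?pow1 ?Rmult_1_r; lra.
Qed.

Lemma exp_INR_mul_ln y k : 0 < y -> exp (INR k * ln y) = y ^ k.
Proof. exact: Rpower_pow. Qed.

Lemma exp_le_one_sub x : 0 <= x <= 1 / 2 -> exp (- (x * (1 + 2 * x))) <= 1 - x.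
Proof.
move=> x01; set y := x * (1 + 2 * x).
have y_ge0 : 0 <= y by rewrite /y; nra.
have ey : exp (- y) * exp y = 1 by rewrite -exp_plus Rplus_opp_l exp_0.
have := exp_ineq1_le y; have := exp_pos (- y).
have : 1 <= (1 - x) * (1 + y) by rewrite /y; nra.
nra.
Qed.

Lemma E_X_ge_exp n c p : 0 < p < 1 -> (1 <= c)%N -> 2 * INR c <= INR n ->
  (1 - p) ^ c <= 1 / 2 ->
  exp (INR c * ln (INR n - INR c) - 2 * INR c * ln (INR c)
       - INR n * ((1 - p) ^ c * (1 + 2 * (1 - p) ^ c))) <= E_X n c c p.
Proof.
case: c => [//|m] p01 _; set c := m.+1.
set x := (1 - p) ^ c => cn x_le.
have c_ge1 : 1 <= INR c by apply: (le_INR 1); apply/leP.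
have c_le_n : (c <= n)%N by apply/leP/INR_le; lra.
have nc_gt0 : 0 < INR n - INR c by lra.
have ic_gt0 : 0 < / INR c by apply: Rinv_0_lt_compat; lra.
apply: Rle_trans (E_X_ge n m (ltac:(lra) : 0 <= p <= 1)).
have binom := @INR_binomial_ge n c c_le_n.
have dom : exp (- (x * (1 + 2 * x))) ^ n <= (1 - x) ^ (n - c).
  have x01 : 0 <= x <= 1 / 2 by split => //; apply: pow_le; lra.
  apply: Rle_trans (_ : (1 - x) ^ n <= _).
    by apply: pow_incr; split; [apply/Rlt_le/exp_pos | exact: exp_le_one_sub].
  rewrite -(subnK c_le_n) pow_add subnK //.
  have := pow_le (1 - x) (n - c) ltac:(lra); have := @pow_le1 (1 - x) c ltac:(lra).
  nra.
set y := x * (1 + 2 * x) in dom *.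
have -> : INR c * ln (INR n - INR c) - 2 * INR c * ln (INR c) - INR n * y
        = INR c * ln (INR n - INR c) + INR c * ln (/ INR c) + INR c * ln (/ INR c)
          + INR n * ln (exp (- y)) by rewrite ln_Rinv ?ln_exp; [ring | lra].
rewrite !exp_plus !exp_INR_mul_ln //; last exact: exp_pos.
rewrite -/c -/x.
have w_ge0 := pow_le _ c (Rlt_le _ _ ic_gt0).
have e_ge0 := pow_le _ n (Rlt_le _ _ (exp_pos (- y))).
apply: Rle_trans (_ : (INR n - INR c) ^ c * (/ INR c) ^ c * (exp (- y) ^ n * (/ INR c) ^ c) <= _).
  by right; ring.
apply: Rmult_le_compat => //; first by apply: Rmult_le_pos => //; apply: pow_le; lra.
  exact: Rmult_le_pos.
exact: Rmult_le_compat_r.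
Qed.

(** * Asymptotics *)

Lemma exp_le_compat x y : x <= y -> exp x <= exp y.
Proof. by case=> [/exp_increasing/Rlt_le | ->] //; apply: Rle_refl. Qed.

Lemma ln_le_compat x y : 0 < x -> x <= y -> ln x <= ln y.
Proof. by move=> x_gt0 [/(ln_increasing _ _ x_gt0)/Rlt_le | ->] //; apply: Rle_refl. Qed.

Lemma ln_ge0 x : 1 <= x -> 0 <= ln x.
Proof. by move=> x_ge1; rewrite -ln_1; apply: ln_le_compat; lra. Qed.

Lemma le_exp_of_ln_le y t : 0 < y -> ln y <= t -> y <= exp t.
Proof. by move=> y_gt0 /exp_le_compat; rewrite exp_ln. Qed.

Lemma lt_exp_of_lt a x : a < x -> a < exp x.
Proof. by move=> ax; have := exp_ineq1_le x; lra. Qed.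

Lemma ln_le_linear k y : 0 < k -> 0 < y -> ln y <= k * y - ln k - 1.
Proof.
move=> k_gt0 y_gt0; have := exp_ineq1_le (ln (k * y)).
by rewrite exp_ln ?ln_mult; nra.
Qed.

Definition eventually_R (P : R -> Prop) : Prop := exists L0, forall L, L0 <= L -> P L.

Lemma eventually_R_ge a : eventually_R (Rle a).
Proof. by exists a. Qed.

Lemma eventually_R_le_mul a b : 0 < b -> eventually_R (fun L => a <= b * L).
Proof.
move=> b_gt0; exists (a / b) => L /(Rmult_le_compat_l b _ _ (Rlt_le _ _ b_gt0)).
by rewrite /Rdiv Rmult_comm Rmult_assoc Rinv_l ?Rmult_1_r //; lra.
Qed.

Lemma eventually_R_and (P Q : R -> Prop) :
  eventually_R P -> eventually_R Q -> eventually_R (fun L => P L /\ Q L).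
Proof.
move=> [L1 P_L1] [L2 Q_L2]; exists (Rmax L1 L2) => L L_ge.
by split; [apply: P_L1 | apply: Q_L2]; move: L_ge; [apply: Rle_trans (Rmax_l _ _) | apply: Rle_trans (Rmax_r _ _)].
Qed.

Lemma eventually_ln_le a k eps : 0 < a -> 0 < eps ->
  eventually_R (fun L => ln (a * L ^ k) <= eps * L).
Proof.
move=> a_gt0 eps_gt0.
set d := eps / (2 * (INR k + 1)).
have k_ge0 := pos_INR k.
have d_gt0 : 0 < d by rewrite /d; apply: Rdiv_lt_0_compat; lra.
have kd : INR k * d <= eps / 2.
  rewrite /d; apply: (Rmult_le_reg_r (2 * (INR k + 1))); first lra.
  field_simplify; nra.
set C := ln a - INR k * (ln d + 1).
exists (Rmax 1 (2 * Rabs C / eps)) => L L_ge.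
have L_ge1 : 1 <= L by apply: Rle_trans (Rmax_l _ _) L_ge.
have CL : 2 * Rabs C <= eps * L.
  have := Rle_trans _ _ _ (Rmax_r _ _) L_ge.
  move=> /(Rmult_le_compat_l eps _ _ (Rlt_le _ _ eps_gt0)).
  by rewrite /Rdiv -Rmult_assoc (Rmult_comm eps) Rmult_assoc Rinv_r; lra.
rewrite ln_mult ?ln_pow; try (apply: pow_lt); try lra.
have lnL := ln_le_linear d_gt0 (ltac:(lra) : 0 < L).
have := Rmult_le_compat_l _ _ _ k_ge0 lnL.
have := Rmult_le_compat_r _ _ _ (ltac:(lra) : 0 <= L) kd.
have eC : C = ln a - INR k * (ln d + 1) by []; have := Rle_abs C; lra.
Qed.

Lemma eventually_R_ln_nat lam (P : R -> Prop) : 0 < lam -> eventually_R P ->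
  exists N : nat, forall n, (N <= n)%N -> 0 < INR n /\ P (ln (INR n) / lam).
Proof.
move=> lam_gt0 [L0 L0P].
have [up_gt _] := archimed (exp (lam * L0)).
have up_ge0 : (0 <= up (exp (lam * L0)))%Z by apply: le_IZR; have := exp_pos (lam * L0); lra.
exists (Z.to_nat (up (exp (lam * L0)))) => n n_ge.
have n_gt : exp (lam * L0) < INR n.
  by apply: Rlt_le_trans up_gt _; rewrite -(Z2Nat.id _ up_ge0) -INR_IZR_INZ; apply/le_INR/leP.
have n_pos : 0 < INR n by have := exp_pos (lam * L0); lra.
split => //; apply: L0P; apply: (Rmult_le_reg_l lam) => //.
have -> : lam * (ln (INR n) / lam) = ln (INR n) by field; lra.
by rewrite -[lam * L0]ln_exp; apply: ln_le_compat; [exact: exp_pos | lra].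
Qed.

(* Here [L] stands for log_b n, so that [exp (lam * L)] is n, and
   [W = ln (lam * L ^ 2) / lam] for log_b((log_b n)(ln n)); c(n) lies in the
   window [L - W + 1 < cr <= L - W + 2]. *)
Section Asymptotics.
Variables (p lam : R).
Hypotheses (p_gt0 : 0 < p) (p_lt1 : p < 1) (lam_gt0 : 0 < lam) (exp_lam : exp (- lam) = 1 - p).

Lemma exp_window_le L cr : 0 < lam * L ^ 2 ->
  L - ln (lam * L ^ 2) / lam + 1 <= cr ->
  exp (lam * L) * exp (- lam * cr) <= (1 - p) * (lam * L ^ 2).
Proof.
move=> pos cr_ge; rewrite -exp_plus -exp_lam -(exp_ln _ pos) -exp_plus.
apply: exp_le_compat.
have := Rmult_le_compat_l _ _ _ (Rlt_le _ _ lam_gt0) cr_ge.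
have : lam * (ln (lam * L ^ 2) / lam) = ln (lam * L ^ 2) by field; lra.
lra.
Qed.

Lemma exponent_lower L W cr :
  1 <= L -> 0 <= W <= L -> lam * W = ln (lam * L ^ 2) -> ln 2 <= lam * L ->
  L - W + 1 < cr <= L - W + 2 -> 2 * cr <= exp (lam * L) -> exp (- lam * cr) <= p / 4 ->
  exp (lam * L) * exp (- lam * cr) <= (1 - p) * (lam * L ^ 2) ->
  p / 2 * lam * L ^ 2 - L * ln (lam * L ^ 2) - L * ln 2 - 2 * (L + 2) * ln (3 * L)
  <= cr * ln (exp (lam * L) - cr) - 2 * cr * ln cr
     - exp (lam * L) * (exp (- lam * cr) * (1 + 2 * exp (- lam * cr))).
Proof.
move=> L_ge1 [W_ge0 W_leL] eW ln2_le [cr_gt cr_le] cr_small x_small nx_le.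
have n_gt0 := exp_pos (lam * L); have x_gt0 := exp_pos (- lam * cr).
set n := exp (lam * L) in n_gt0 cr_small nx_le *.
set x := exp (- lam * cr) in x_gt0 x_small nx_le *.
have ln_n_cr : lam * L - ln 2 <= ln (n - cr).
  have -> : lam * L - ln 2 = ln (n * / 2) by rewrite ln_mult ?ln_Rinv ?ln_exp; lra.
  by apply: ln_le_compat; lra.
have ln_cr : 0 <= ln cr <= ln (3 * L) by split; [apply: ln_ge0 | apply: ln_le_compat]; lra.
have first_term : (L - W) * (lam * L - ln 2) <= cr * ln (n - cr).
  apply: Rle_trans (_ : cr * (lam * L - ln 2) <= _); last by apply: Rmult_le_compat_l; lra.
  by apply: Rmult_le_compat_r; lra.
have second_term : cr * ln cr <= (L + 2) * ln (3 * L) by apply: Rmult_le_compat; lra.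
have third_term : n * (x * (1 + 2 * x)) <= (1 - p) * (lam * L ^ 2) * (1 + p / 2).
  by rewrite -Rmult_assoc; apply: Rmult_le_compat; nra.
have : 0 <= p ^ 2 * (lam * L ^ 2) by apply: Rmult_le_pos; nra.
have : 0 <= W * ln 2 by apply: Rmult_le_pos; [lra | apply: ln_ge0; lra].
nra.
Qed.

Lemma exponent_lower_large M : eventually_R (fun L =>
  M < p / 2 * lam * L ^ 2 - L * ln (lam * L ^ 2) - L * ln 2 - 2 * (L + 2) * ln (3 * L)).
Proof.
set eps := p * lam / 32.
have eps_gt0 : 0 < eps by rewrite /eps; nra.
have [L0 L0P] := eventually_R_and (eventually_ln_le 2 lam_gt0 eps_gt0)
  (eventually_R_and (eventually_ln_le 1 (ltac:(lra) : 0 < 3) eps_gt0)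
  (eventually_R_and (eventually_R_ge 1) (eventually_R_and (eventually_R_le_mul (ln 2) eps_gt0)
     (eventually_R_le_mul (Rabs M + 1) (ltac:(lra) : 0 < 4 * eps))))).
exists L0 => L /L0P [ln_lamL [ln_3L [L_ge1 [L_ln2 L_M]]]].
rewrite pow_1 in ln_3L.
have : 0 <= ln (3 * L) by apply: ln_ge0; lra.
have := Rle_abs M.
rewrite /eps in ln_lamL ln_3L L_ln2 L_M *; nra.
Qed.

Lemma window_eventually M : eventually_R (fun L => ln (lam * L ^ 2) / lam <= L /\ forall cr,
  L - ln (lam * L ^ 2) / lam + 1 < cr <= L - ln (lam * L ^ 2) / lam + 2 ->
  [/\ 1 <= cr, 2 * cr <= exp (lam * L), exp (- lam * cr) <= 1 / 2 &
   M < cr * ln (exp (lam * L) - cr) - 2 * cr * ln cr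
       - exp (lam * L) * (exp (- lam * cr) * (1 + 2 * exp (- lam * cr)))]).
Proof.
have c4_gt0 : 0 < 4 * lam / p by apply: Rdiv_lt_0_compat; lra.
have [L0 L0P] := eventually_R_and (exponent_lower_large M)
  (eventually_R_and (eventually_R_ge 1) (eventually_R_and (eventually_R_le_mul 1 lam_gt0)
  (eventually_R_and (eventually_R_le_mul (ln 2) lam_gt0)
  (eventually_R_and (eventually_ln_le 2 lam_gt0 lam_gt0)
  (eventually_R_and (eventually_ln_le 1 (ltac:(lra) : 0 < 6) lam_gt0)
                    (eventually_ln_le 2 c4_gt0 lam_gt0)))))).
exists L0 => L /L0P [M_lt [L_ge1 [lamL_ge1 [ln2_le [ln_lamL [ln_6L ln_c4L]]]]]].
rewrite pow_1 in ln_6L.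
set W := ln (lam * L ^ 2) / lam.
have lamL2_ge1 : 1 <= lam * L ^ 2 by nra.
have eW : lam * W = ln (lam * L ^ 2) by rewrite /W; field; lra.
have W_ge0 : 0 <= W by apply: Rmult_le_pos; [apply: ln_ge0 | apply/Rlt_le/Rinv_0_lt_compat]; lra.
have W_leL : W <= L by nra.
split => // cr cr_win.
have six_L := le_exp_of_ln_le (ltac:(lra) : 0 < 6 * L) ln_6L.
have c4_L := le_exp_of_ln_le (ltac:(nra) : 0 < 4 * lam / p * L ^ 2) ln_c4L.
have nx_le := exp_window_le (ltac:(lra) : 0 < lam * L ^ 2) (ltac:(lra) : L - W + 1 <= cr).
have x_le : exp (- lam * cr) <= p / 4.
  have n_gt0 := exp_pos (lam * L); apply: (Rmult_le_reg_l (exp (lam * L))) => //.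
  have : 4 * lam / p * L ^ 2 * (p / 4) = lam * L ^ 2 by field; lra.
  nra.
have cr_ge1 : 1 <= cr by lra.
have two_cr : 2 * cr <= exp (lam * L) by lra.
split => //; first lra.
apply: Rlt_le_trans M_lt _.
exact: (exponent_lower L_ge1 (conj W_ge0 W_leL) eW ln2_le cr_win two_cr x_le nx_le).
Qed.

End Asymptotics.

Lemma floorR_spec x : IZR (floorR x) <= x < IZR (floorR x) + 1.
Proof. by have [] := archimed x; rewrite /floorR minus_IZR; lra. Qed.

Lemma c_of_window p n lam L :
  lam = ln (/ (1 - p)) -> 0 < lam -> lam * L = ln (INR n) ->
  ln (lam * L ^ 2) / lam <= L ->
  L - ln (lam * L ^ 2) / lam + 1 < INR (Z.to_nat (c_of p n)) <= L - ln (lam * L ^ 2) / lam + 2.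
Proof.
move=> elam lam_gt0 eL W_le.
have -> : c_of p n = (floorR (L - ln (lam * L ^ 2) / lam) + 2)%Z.
  rewrite /c_of /logb -elam; congr (floorR _ + 2)%Z.
  have -> : ln (INR n) / lam = L by rewrite -eL; field; lra.
  by rewrite -eL; congr (_ - ln _ / _); ring.
have [fl_le fl_gt] := floorR_spec (L - ln (lam * L ^ 2) / lam).
rewrite INR_IZR_INZ Z2Nat.id; last by apply: le_IZR; rewrite plus_IZR; lra.
by rewrite plus_IZR; lra.
Qed.

Unset Implicit Arguments.

Theorem mainTheorem9 (p : R) (hp0 : Rlt 0 p) (hp1 : Rlt p 1) :
  forall M : R, exists N : nat, forall n : nat, (N <= n)%N ->
    Rlt M (E_X n (Z.to_nat (c_of p n)) (Z.to_nat (c_of p n)) p).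
Proof.
move=> M; set lam := ln (/ (1 - p)).
have lam_gt0 : 0 < lam.
  by rewrite /lam -ln_1; apply: ln_increasing; [lra | rewrite -Rinv_1; apply: Rinv_lt_contravar; lra].
have exp_lam : exp (- lam) = 1 - p by rewrite /lam ln_Rinv ?Ropp_involutive ?exp_ln; lra.
have [N NP] := eventually_R_ln_nat lam_gt0 (window_eventually hp0 hp1 lam_gt0 exp_lam M).
exists N => n /NP [n_pos [W_le window]].
set L := ln (INR n) / lam in W_le window.
have eL : lam * L = ln (INR n) by rewrite /L; field; lra.
have := c_of_window (p := p) (erefl _) lam_gt0 eL W_le.
set c := Z.to_nat (c_of p n) => /window.
have x_eq : exp (- lam * INR c) = (1 - p) ^ c.
  by rewrite -exp_INR_mul_ln; [rewrite -exp_lam ln_exp; congr exp; ring | lra].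
rewrite eL exp_ln // x_eq => -[c_ge1 two_c x_half M_lt].
have c_pos : (1 <= c)%N by apply/leP/INR_le.
apply: Rlt_le_trans (E_X_ge_exp (conj hp0 hp1) c_pos two_c x_half).
exact: lt_exp_of_lt M_lt.
Qed.
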